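(* Let $K$ be a field of characteristic $0$ or $>n$, $P=K[v_1,\dots,v_n]$, let $u\in P$ be homogeneous of degree $d$, and let $r\ge1$. There is a polynomial $R^{u,r}$ in the indeterminates $a^{(i)}_J$, homogeneous of degree $rd$ with respect to the auxiliary grading, such that for every choice of values $a^{(i)}_J\in K$ the $r$-th coefficient of the characteristic polynomial of $\mathrm{mult}_u$ (the sum of the principal $r\times r$ minors of a matrix representing it) equals $T^{rd}R^{u,r}(a)$. In particular $\mathrm{Tr}(\mathrm{mult}_u)=T^dR^{u,1}$.
   Context: $e_i$ is the $i$-th elementary symmetric polynomial in $v_1,\dots,v_n$. For $1\le i\le n$ and $J\subseteq[n]$ with $|J|\le i-1$, $a^{(i)}_J$ has auxiliary degree $i-|J|$. With $v^J=\prod_{j\in J}v_j$ and a new variable $T$, put $g_i^H=\sum_{|J|\le i-1}a^{(i)}_Jv^JT^{i-|J|}$ and $E^H=(e_1+g_1^H,\dots,e_n+g_n^H)\subseteq P[T]$. $P[T]/E^H$ is a free $K[T]$-module of rank $n!$, and $\mathrm{mult}_u$ is the $K[T]$-linear endomorphism $p\mapsto up$ of it. *)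

From HB Require Import structures.
From mathcomp Require Import all_boot all_order all_algebra.
From mathcomp Require Import mpoly.
Set Implicit Arguments. Unset Strict Implicit. Unset Printing Implicit Defensive.
Import GRing.Theory.
Local Open Scope ring_scope.

(* Index set of the parameters a^{(i)}_J : pairs (i, J) with i : 'I_n
   standing for the paper's index i+1 (so 1 <= i+1 <= n), J a subset of [n]
   with |J| <= (i+1) - 1. *)
Definition Aidx (n : nat) := {x : 'I_n * {set 'I_n} | (#|x.2| <= x.1)%N}.

Definition auxdeg n (x : Aidx n) : nat := ((val x).1).+1 - #|(val x).2|.

Definition nA (n : nat) : nat := #|{: Aidx n}|.

(* The parameter a_x corresponds to the variable 'X_(enum_rank x) of
   {mpoly K[nA n]}; weighted (auxiliary) degree of a monomial. *)
Definition auxmdeg n (m : 'X_{1..nA n}) : nat :=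
  \sum_(k : 'I_(nA n)) (m k * auxdeg (enum_val k))%N.

Definition aux_homog (K : fieldType) n (e : nat) (R : {mpoly K[nA n]}) : Prop :=
  forall m, m \in msupp R -> auxmdeg m = e.

Definition aux_eval (K : fieldType) n (R : {mpoly K[nA n]}) (a : Aidx n -> K) : K :=
  R.@[fun k : 'I_(nA n) => a (enum_val k)].

(* P[T] is {poly {mpoly K[n]}} (polynomials in T over P = K[v_1..v_n]).
   Embedding of K[T] into P[T]. *)
Definition KT_to_PT (K : fieldType) n (c : {poly K}) : {poly {mpoly K[n]}} :=
  map_poly (fun x : K => x%:MP_[n]) c.

Definition gH (K : fieldType) n (a : Aidx n -> K) (i : 'I_n) : {poly {mpoly K[n]}} :=
  \sum_(x : Aidx n | (val x).1 == i)
     (((a x)%:MP_[n] * \prod_(j in (val x).2) 'X_j)%:P * 'X^(auxdeg x)).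

Definition genH (K : fieldType) n (a : Aidx n -> K) (i : 'I_n) : {poly {mpoly K[n]}} :=
  (mesym n K i.+1)%:P + gH a i.

Definition inEH (K : fieldType) n (a : Aidx n -> K) (p : {poly {mpoly K[n]}}) : Prop :=
  exists h : 'I_n -> {poly {mpoly K[n]}}, p = \sum_(i < n) h i * genH a i.

Definition is_basis_mod_EH (K : fieldType) n (a : Aidx n -> K) N
    (b : 'I_N -> {poly {mpoly K[n]}}) : Prop :=
  (forall p, exists c : 'I_N -> {poly K},
      inEH a (p - \sum_(k < N) KT_to_PT n (c k) * b k)) /\
  (forall c : 'I_N -> {poly K},
      inEH a (\sum_(k < N) KT_to_PT n (c k) * b k) -> forall k, c k = 0).

Definition represents_mult (K : fieldType) n (a : Aidx n -> K) N
    (b : 'I_N -> {poly {mpoly K[n]}}) (u : {mpoly K[n]}) (M : 'M[{poly K}]_N) : Prop :=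
  forall j : 'I_N, inEH a (u%:P * b j - \sum_(i < N) KT_to_PT n (M i j) * b i).

Definition principal_minor_sum (R : comNzRingType) N (r : nat) (M : 'M[R]_N) : R :=
  \sum_(S : {set 'I_N} | #|S| == r)
     \det (mxsub (@enum_val _ (mem S)) (@enum_val _ (mem S)) M).

From HB Require Import structures.
From mathcomp Require Import all_boot all_order all_algebra.
From mathcomp Require Import mpoly.
From mathcomp Require Import all_fingroup.
From mathcomp Require Import zify ring.
Set Implicit Arguments. Unset Strict Implicit. Unset Printing Implicit Defensive.
Import GRing.Theory.
Local Open Scope ring_scope.

(* Work with the a^(i)_J as indeterminates.  For any values of the parameters
   the Artin monomials v^t (t_i <= i) span P[T] modulo E^H: prod_(i <= k) (X - v_i)
   vanishes at v_k, and modulo the generators its coefficients become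
   polynomials in v_(k+1), ..., v_n, which rewrites v_k^(k+1) into smaller
   monomials.  Expanding u v^s on this family generically and keeping the part
   of total degree d + |s| for the grading deg v_i = 1, deg a^(i)_J = i - |J|
   gives a matrix Mg of mult_u whose (t, s) entry is homogeneous of degree
   d + |s| - |t|; conjugating by diag (T^|t|) shows that its r-th principal
   minor sum R is homogeneous of degree r d.  Specializing a^(i)_J to
   a^(i)_J T^(i - |J|) turns Mg into a matrix of mult_u on a spanning family,
   which is conjugate to the matrix M on the given basis; principal minor sums,
   the coefficients of det (1 + X M), are conjugation invariant. *)

Section MonomialSupport.
Variables (S : nzRingType) (n : nat).
Implicit Types (P Q : pred 'X_{1..n}) (p q : {mpoly S[n]}).

Definition allm P p := all P (msupp p).

Lemma allmP P p : reflect {in msupp p, forall m, P m} (allm P p).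
Proof. exact: allP. Qed.

Lemma sub_allm P Q p : (forall m, P m -> Q m) -> allm P p -> allm Q p.
Proof. by move=> PQ /allmP hp; apply/allmP => m /hp /PQ. Qed.

Lemma allm0 P : allm P 0.
Proof. by rewrite /allm msupp0. Qed.

Lemma allmD P p q : allm P p -> allm P q -> allm P (p + q).
Proof.
move=> /allmP hp /allmP hq; apply/allmP => m /msuppD_le.
by rewrite mem_cat => /orP[/hp|/hq].
Qed.

Lemma allmN P p : allm P p -> allm P (- p).
Proof. by move=> /allmP hp; apply/allmP => m; rewrite (perm_mem (msuppN _)) => /hp. Qed.

Lemma allmB P p q : allm P p -> allm P q -> allm P (p - q).
Proof. by move=> hp hq; apply: allmD => //; apply: allmN. Qed.

Lemma allm_sum P (I : Type) (r : seq I) (C : pred I) (F : I -> {mpoly S[n]}) :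
  (forall i, C i -> allm P (F i)) -> allm P (\sum_(i <- r | C i) F i).
Proof.
move=> h; elim/big_rec: _ => [|i x Ci hx]; first exact: allm0.
by apply: allmD => //; apply: h.
Qed.

Lemma allmZ P c p : allm P p -> allm P (c *: p).
Proof. by move=> /allmP hp; apply/allmP => m /msuppZ_le /hp. Qed.

Lemma allmX P m : P m -> allm P 'X_[m].
Proof. by move=> Pm; rewrite /allm msuppX /= Pm. Qed.

Lemma allmC P c : P 0%MM -> allm P c%:MP.
Proof. by move=> P0; rewrite /allm msuppC; case: eqP => //= _; rewrite P0. Qed.

Lemma allmM P1 P2 P3 p q :
  (forall a b, P1 a -> P2 b -> P3 (a + b)%MM) ->
  allm P1 p -> allm P2 q -> allm P3 (p * q).
Proof.
move=> h /allmP hp /allmP hq; apply/allmP => m /msuppM_le /allpairsP.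
by case=> -[a b] /= [ha hb ->]; apply: h; [apply: hp | apply: hq].
Qed.

End MonomialSupport.

Section ArtinSpanning.
Variables (S : comNzRingType) (n : nat).
Local Notation W := {mpoly S[n]}.
Variable g : 'I_n -> W.
Hypothesis deg_g : forall i : 'I_n, allm (fun m => mdeg m <= i)%N (g i).

Definition gen (i : 'I_n) : W := mesym n S i.+1 + g i.

Definition vars_from (k : nat) (m : 'X_{1..n}) := [forall i : 'I_n, (i < k)%N ==> (m i == 0%N)].

Definition esym_decomp (k l : nat) (p : W) := exists (c : 'I_n -> W) (q : W),
  [/\ p = \sum_(j < n) c j * mesym n S j.+1 + q,
      forall j : 'I_n, allm (fun m => mdeg m + j.+1 <= l)%N (c j) &
      allm (fun m => vars_from k m && (mdeg m <= l)%N) q].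

Lemma esym_decomp0 k l : esym_decomp k l 0.
Proof.
exists (fun _ => 0), 0; split=> [|j|]; rewrite ?allm0 //.
by rewrite big1 ?addr0 // => j _; rewrite mul0r.
Qed.

Lemma esym_decompD k l p q :
  esym_decomp k l p -> esym_decomp k l q -> esym_decomp k l (p + q).
Proof.
case=> c1 [r1 [-> h1 h1']] [c2 [r2 [-> h2 h2']]].
exists (fun j => c1 j + c2 j), (r1 + r2); split=> [|j|]; last exact: allmD.
- under [X in _ = X + _]eq_bigr => j _ do rewrite mulrDl.
  by rewrite big_split /=; ring.
- exact: allmD.
Qed.

Lemma esym_decomp_sum k l (I : Type) (r : seq I) (P : pred I) (F : I -> W) :
  (forall i, P i -> esym_decomp k l (F i)) -> esym_decomp k l (\sum_(i <- r | P i) F i).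
Proof.
move=> h; elim/big_rec: _ => [|i x Pi hx]; first exact: esym_decomp0.
by apply: esym_decompD => //; apply: h.
Qed.

Lemma esym_decompW k l p : esym_decomp k.+1 l p -> esym_decomp k l p.
Proof.
case=> c [r [-> h h']]; exists c, r; split => //.
apply: sub_allm h' => m /andP[/forallP hm ->]; rewrite andbT.
by apply/forallP => i; apply/implyP => hi; apply: (implyP (hm i)); apply: ltnW.
Qed.

Lemma esym_decompXM (k : 'I_n) l p : esym_decomp k l p -> esym_decomp k l.+1 ('X_k * p).
Proof.
have Xk a b : a \in pred1 U_(k)%MM -> (mdeg (a + b) = (mdeg b).+1)%N.
  by move=> /eqP ->; rewrite mdegD mdeg1.
have allmXk : allm (pred1 U_(k)%MM) ('X_k : W).
  by apply: allmX; rewrite inE.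
case=> c [r [-> h h']]; exists (fun j => 'X_k * c j), ('X_k * r); split.
- by rewrite mulrDr mulr_sumr; congr (_ + _); apply: eq_bigr => j _; rewrite mulrA.
- by move=> j; apply: (allmM _ allmXk (h j)) => a b /Xk ->; lia.
apply: (allmM _ allmXk h') => a b ha /andP[/forallP hb]; rewrite Xk // ltnS => ->.
rewrite andbT; apply/forallP => i; apply/implyP => hi; rewrite (eqP ha) mnmDE mnm1E.
by rewrite (eqP (implyP (hb i) hi)) addn0 eqb0; apply: contraTneq hi => ->; rewrite ltnn.
Qed.

Lemma esym_decompC k l (c : S) : esym_decomp k l c%:MP.
Proof.
exists (fun _ => 0), c%:MP; split=> [|j|]; rewrite ?allm0 //.
  by rewrite big1 ?add0r // => j _; rewrite mul0r.
apply: allmC; rewrite mdeg0 andbT; apply/forallP => i; apply/implyP => _.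
by rewrite mnm0E.
Qed.

Lemma esym_decomp_mesym k l (c : S) : (l <= n)%N -> esym_decomp k l (c%:MP * mesym n S l).
Proof.
case: l => [|j] hj; first by rewrite mesym0E mulr1; apply: esym_decompC.
pose jo := Ordinal hj.
exists (fun j' => if j' == jo then c%:MP else 0), 0; split=> [|j'|]; rewrite ?allm0 //.
  by rewrite addr0 (bigD1 jo) //= eqxx big1 ?addr0 // => j' /negbTE ->; rewrite mul0r.
case: eqP => [->|_]; last exact: allm0.
by apply: allmC; rewrite mdeg0.
Qed.

Definition prodXsub (m : nat) : {poly W} := \prod_(i < n | (i < m)%N) ('X - ('X_i)%:P).

Lemma prodXsubS (k : 'I_n) : prodXsub k.+1 = ('X - ('X_k)%:P) * prodXsub k.
Proof.
rewrite /prodXsub (bigD1 k) ?ltnSn //=; congr (_ * _); apply: eq_bigl => i.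
by rewrite ltnS ltn_neqAle andbC -val_eqE.
Qed.

Lemma coef_prodXsubS (k : 'I_n) i :
  (prodXsub k.+1)`_i.+1 = (prodXsub k)`_i - 'X_k * (prodXsub k)`_i.+1.
Proof. by rewrite prodXsubS mulrBl coefB coefXM coefCM. Qed.

Lemma coef_prodXsub_top m : (m <= n)%N ->
  (prodXsub m)`_m = 1 /\ forall i, (m < i)%N -> (prodXsub m)`_i = 0.
Proof.
elim: m => [|m IH] hm.
  by rewrite /prodXsub big_pred0 //; split=> [|[|i] //]; rewrite coefC.
have [top0 high0] := IH (ltnW hm).
have E := coef_prodXsubS (Ordinal hm); simpl in E.
split; first by rewrite E top0 high0 // mulr0 subr0.
by case=> [//|i] hi; rewrite E !high0 ?mulr0 ?subr0 //; lia.
Qed.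

Lemma prodXsub_Viete :
  prodXsub n = \sum_(k < n.+1) (-1) ^+ k *: (mesym n S k *: 'X^(n - k)).
Proof.
pose f := mmap (intr : int -> W) (fun i => 'X_i).
have f_mesym k : f (mesym n int k) = mesym n S k.
  rewrite /mesym /f raddf_sum /=; apply: eq_bigr => A _.
  by rewrite rmorph_prod /=; apply: eq_bigr => i _; rewrite mmapX mmap1U.
have := Viete n => /(congr1 (map_poly f)); rewrite rmorph_prod /= => E.
have -> : prodXsub n = \prod_(i < n) ('X - ('X_i)%:P) by apply: eq_bigl => i; rewrite ltn_ord.
rewrite (eq_bigr (fun i : 'I_n => map_poly f ('X - ('X_i)%:P))); last first.
  by move=> i _; rewrite raddfB /= map_polyX map_polyC /= mmapX mmap1U.
rewrite E raddf_sum /=; apply: eq_bigr => k _.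
by rewrite !map_polyZ /= map_polyXn rmorphXn rmorphN1 -f_mesym.
Qed.

Lemma esym_decomp_prodXsub_n i : (i <= n)%N -> esym_decomp n (n - i) (prodXsub n)`_i.
Proof.
move=> hi; rewrite prodXsub_Viete coef_sum; apply: esym_decomp_sum => k _.
rewrite !coefZ coefXn; case: eqP => [->|_]; last by rewrite !mulr0; apply: esym_decomp0.
have -> : ((-1) ^+ k : W) = ((-1) ^+ k : S)%:MP by rewrite rmorphXn rmorphN1.
rewrite mulr1.
have -> : (n - (n - k))%N = k by have := ltn_ord k; lia.
by apply: esym_decomp_mesym; rewrite -ltnS.
Qed.

(* The coefficients of [prod_(i < m) (X - v_i)] are, up to sign, the
   elementary symmetric polynomials of [v_0, ..., v_(m-1)]; modulo the
   [e_j] these become polynomials in the remaining variables. *)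
Lemma esym_decomp_prodXsub m i : (m <= n)%N -> (i <= m)%N ->
  esym_decomp m (m - i) (prodXsub m)`_i.
Proof.
move eqt : (n - m)%N => t; elim: t m eqt i => [|t IH] m eqt i hm hi.
  have -> : m = n by lia.
  by apply: esym_decomp_prodXsub_n; lia.
have hmn : (m < n)%N by lia.
have E := coef_prodXsubS (Ordinal hmn); simpl in E.
suff hj : forall j, (j <= m)%N -> esym_decomp m j (prodXsub m)`_(m - j).
  by have := hj (m - i)%N (leq_subr _ _); rewrite subKn.
elim=> [|j IHj] hj.
  rewrite subn0 (coef_prodXsub_top (ltnW hmn)).1 -(rmorph1 (@mpolyC n S)).
  exact: esym_decompC.
have Ej : (m - j)%N = (m - j.+1).+1 by lia.
have -> : (prodXsub m)`_(m - j.+1) =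
    (prodXsub m.+1)`_(m - j.+1).+1 + 'X_(Ordinal hmn) * (prodXsub m)`_(m - j.+1).+1.
  by rewrite E subrK.
apply: esym_decompD.
  apply: esym_decompW; have := IH m.+1 _ (m - j.+1).+1.
  have -> : (m.+1 - (m - j.+1).+1)%N = j.+1 by lia.
  by apply; lia.
have hj' : (j <= m)%N by lia.
by have := esym_decompXM (k := Ordinal hmn) (IHj hj'); rewrite -Ej.
Qed.

Definition mweight (m : 'X_{1..n}) := (\sum_(i < n) m i * (n - i))%N.

(* [mweight] favours low-index variables, so trading [v_k^(k+1)] for monomials
   of the same degree in [v_(k+1), ...] goes down in [mlt]. *)
Definition mlt (b c : 'X_{1..n}) :=
  (mdeg b < mdeg c)%N || ((mdeg b == mdeg c) && (mweight b < mweight c)%N).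

Lemma mweightD a b : mweight (a + b)%MM = (mweight a + mweight b)%N.
Proof. by rewrite /mweight -big_split /=; apply: eq_bigr => i _; rewrite mnmDE mulnDl. Qed.

Lemma mweightU (k : 'I_n) i : mweight (U_(k) *+ i)%MM = (i * (n - k))%N.
Proof.
rewrite /mweight (bigD1 k) //= big1 ?addn0; first by rewrite mulmnE mnm1E eqxx mul1n.
by move=> j /negbTE hj; rewrite mulmnE mnm1E eq_sym hj.
Qed.

Lemma mdegU (k : 'I_n) i : mdeg (U_(k) *+ i)%MM = i.
Proof. by rewrite mdegMn mdeg1 mul1n. Qed.

Lemma mweight_vars_from k a : vars_from k a -> (mweight a <= mdeg a * (n - k))%N.
Proof.
move=> /forallP h; rewrite /mweight mdegE big_distrl /=; apply: leq_sum => i _.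
have := h i; case: ltnP => hi /=; first by move/eqP ->.
by move=> _; rewrite leq_mul2l leq_sub2l ?orbT.
Qed.

Lemma mltD2l a b c : mlt b c -> mlt (a + b)%MM (a + c)%MM.
Proof. by rewrite /mlt !mdegD !mweightD ltn_add2l eqn_add2l ltn_add2l. Qed.

Lemma mlt_ind (P : 'X_{1..n} -> Prop) :
  (forall m, (forall b, mlt b m -> P b) -> P m) -> forall m, P m.
Proof.
move=> IH m; move: {2}(mdeg m).+1 (ltnSn (mdeg m)) => D.
elim: D m => // D IHD m; move: {2}(mweight m).+1 (ltnSn (mweight m)) => V.
elim: V m => // V IHV m hV hD; apply: IH => b /orP[hb|/andP[/eqP hb hb']].
  by apply: IHD; lia.
by apply: IHV; lia.
Qed.

Definition gen_lt (m0 : 'X_{1..n}) (p : W) := exists (h : 'I_n -> W) (q : W),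
  p = \sum_(i < n) h i * gen i + q /\ allm (mlt^~ m0) q.

Lemma gen_lt_sum m0 (I : Type) (r : seq I) (P : pred I) (F : I -> W) :
  (forall i, P i -> gen_lt m0 (F i)) -> gen_lt m0 (\sum_(i <- r | P i) F i).
Proof.
move=> h; elim/big_rec: _ => [|i x Pi [h1 [q1 [-> hq1]]]].
  by exists (fun _ => 0), 0; rewrite big1 ?addr0 ?allm0 // => i _; rewrite mul0r.
case: (h i Pi) => h2 [q2 [-> hq2]]; exists (fun j => h2 j + h1 j), (q2 + q1).
split; last exact: allmD.
by under [X in _ = X + _]eq_bigr => j _ do rewrite mulrDl; rewrite big_split /=; ring.
Qed.

Lemma gen_ltN m0 p : gen_lt m0 p -> gen_lt m0 (- p).
Proof.
case=> h [q [-> hq]]; exists (fun j => - h j), (- q); split; last exact: allmN.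
by rewrite opprD -sumrN; congr (_ + _); apply: eq_bigr => j _; rewrite mulNr.
Qed.

Lemma gen_ltXM m0 m p : gen_lt m0 p -> gen_lt (m + m0)%MM ('X_[m] * p).
Proof.
case=> h [q [-> hq]]; exists (fun j => 'X_[m] * h j), ('X_[m] * q); split.
  by rewrite mulrDr mulr_sumr; congr (_ + _); apply: eq_bigr => j _; rewrite mulrA.
have allmXm : allm (pred1 m) ('X_[m] : W) by apply: allmX; rewrite inE.
by apply: (allmM _ allmXm hq) => a b /eqP ->; apply: mltD2l.
Qed.

(* Substituting [e_(j+1) = gen j - g j] into a decomposition; the [g j] have
   lower degree, and the remainder only involves variables of smaller weight. *)
Lemma gen_lt_esym_decomp (k : 'I_n) i p : (i < k.+1)%N ->
  esym_decomp k.+1 (k.+1 - i) p -> gen_lt (U_(k) *+ k.+1)%MM (p * 'X_k ^+ i).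
Proof.
move=> hi [c [q [-> hc hq]]].
exists (fun j => c j * 'X_k ^+ i),
  (q * 'X_k ^+ i - \sum_(j < n) c j * 'X_k ^+ i * g j); split.
  rewrite mulrDl mulr_suml /gen.
  under [in RHS]eq_bigr => j _ do rewrite mulrDr.
  by rewrite big_split /=; under eq_bigr => j _ do rewrite mulrAC; ring.
have allmXki : allm (pred1 (U_(k) *+ i)%MM) ('X_k ^+ i : W).
  by rewrite mpolyXn; apply: allmX; rewrite inE.
apply: allmB.
  apply: (allmM _ hq allmXki) => a b /andP[ha hd] /eqP ->; rewrite /mlt !mdegD !mdegU.
  rewrite !mweightD !mweightU; have := mweight_vars_from ha; have := ltn_ord k.
  by nia.
apply: allm_sum => j _.
have hcX : allm (fun m => mdeg m + j.+1 <= k.+1)%N (c j * 'X_k ^+ i).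
  by apply: (allmM _ (hc j) allmXki) => a b ha /eqP ->; rewrite mdegD mdegU; lia.
by apply: (allmM _ hcX (deg_g j)) => a b ha hb; rewrite /mlt mdegD mdegU; apply/orP; left; lia.
Qed.

Lemma gen_lt_power (k : 'I_n) : gen_lt (U_(k) *+ k.+1)%MM ('X_k ^+ k.+1).
Proof.
set A := prodXsub k.+1.
have [Atop Ahigh] := coef_prodXsub_top (ltn_ord k : (k.+1 <= n)%N).
have sizeA : (size A <= k.+2)%N by apply/leq_sizeP => j hj; apply: Ahigh.
have : A.[('X_k : W)] == 0 by rewrite /A prodXsubS hornerM hornerXsubC subrr mul0r.
rewrite (horner_coef_wide _ sizeA) big_ord_recr /= Atop mul1r addrC addr_eq0 => /eqP ->.
apply: gen_ltN; apply: gen_lt_sum => i _; apply: gen_lt_esym_decomp => //.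
by apply: esym_decomp_prodXsub; have := ltn_ord i; have := ltn_ord k; lia.
Qed.

Definition artin := {dffun forall i : 'I_n, 'I_i.+1}.

Definition artin_mnm (t : artin) : 'X_{1..n} := [multinom (t i : nat) | i < n].

Definition spanned (p : W) := exists (c : artin -> S) (h : 'I_n -> W),
  p = \sum_(t : artin) c t *: 'X_[artin_mnm t] + \sum_(i < n) h i * gen i.

Lemma spanned_sum (I : Type) (r : seq I) (P : pred I) (F : I -> W) :
  (forall i, P i -> spanned (F i)) -> spanned (\sum_(i <- r | P i) F i).
Proof.
move=> hF; elim/big_rec: _ => [|i x Pi [c1 [h1 ->]]].
  exists (fun _ => 0), (fun _ => 0).
  by rewrite !big1 ?addr0 // => i _; rewrite ?mul0r ?scale0r.
case: (hF i Pi) => c2 [h2 ->]; exists (fun t => c2 t + c1 t), (fun i => h2 i + h1 i).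
under [X in _ = X + _]eq_bigr => t _ do rewrite scalerDl.
under [X in _ = _ + X]eq_bigr => j _ do rewrite mulrDl.
by rewrite !big_split /=; ring.
Qed.

Lemma spannedZ a p : spanned p -> spanned (a *: p).
Proof.
case=> c [h ->]; exists (fun t => a * c t), (fun i => a *: h i).
rewrite scalerDr !scaler_sumr; congr (_ + _); apply: eq_bigr => *.
  by rewrite scalerA.
by rewrite scalerAl.
Qed.

Lemma spanned_gen_lt m p :
  (forall b, mlt b m -> spanned 'X_[b]) -> gen_lt m p -> spanned p.
Proof.
move=> IH [h [q [-> /allmP hq]]].
have [c [h' ->]] : spanned q.
  by rewrite (mpolyE q) big_seq; apply: spanned_sum => b /hq /IH /(spannedZ q@_b).
exists c, (fun i => h i + h' i).
under [X in _ = _ + X]eq_bigr => i _ do rewrite mulrDl.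
by rewrite big_split /=; ring.
Qed.

Lemma spanned_artin_mnm t : spanned 'X_[artin_mnm t].
Proof.
exists (fun t' => (t' == t)%:R), (fun _ => 0).
rewrite (bigD1 t) //= eqxx scale1r big1 => [|t' /negbTE ->]; last by rewrite scale0r.
by rewrite big1 ?addr0 // => j _; rewrite mul0r.
Qed.

Lemma spannedX m : spanned 'X_[m].
Proof.
elim/mlt_ind: m => m IH.
have [/forallP artin_m|] := boolP [forall i : 'I_n, (m i <= i)%N].
  pose t : artin := [ffun i => Ordinal (artin_m i : (m i < i.+1)%N)].
  have -> : m = artin_mnm t by apply/mnmP => i; rewrite mnmE ffunE.
  exact: spanned_artin_mnm.
rewrite negb_forall => /existsP [k]; rewrite -ltnNge => hk.
have Em : m = ((m - U_(k) *+ k.+1) + U_(k) *+ k.+1)%MM.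
  rewrite submK //; apply/mnm_lepP => i; rewrite mulmnE mnm1E.
  by case: eqP => [<-|_]; rewrite ?mul1n ?mul0n.
apply: (spanned_gen_lt IH); rewrite Em mpolyXD -mpolyXn.
exact: gen_ltXM (gen_lt_power k).
Qed.

Lemma artin_spanning p : spanned p.
Proof. by rewrite (mpolyE p); apply: spanned_sum => m _; apply/spannedZ/spannedX. Qed.

End ArtinSpanning.

Lemma card_artin n : #|{: artin n}| = n`!.
Proof.
rewrite card_dep_ffun foldrE big_map big_enum /= fact_prod big_add1 /= big_mkord.
by apply: eq_bigr => i _; rewrite card_ord.
Qed.

Definition artin_of_ord n (k : 'I_(n`!)) : artin n :=
  enum_val (cast_ord (esym (card_artin n)) k).

Lemma artin_of_ord_bij n : bijective (@artin_of_ord n).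
Proof.
exists (fun t => cast_ord (card_artin n) (enum_rank t)) => [k|t].
  by rewrite /artin_of_ord enum_valK cast_ordKV.
by rewrite /artin_of_ord cast_ordK enum_rankK.
Qed.

Lemma sum_artin (V : nmodType) n (F : artin n -> V) :
  \sum_(t : artin n) F t = \sum_(k < n`!) F (artin_of_ord k).
Proof. by rewrite (reindex (@artin_of_ord n)) //; apply/onW_bij/artin_of_ord_bij. Qed.

Section PrincipalMinors.
Variable R : comNzRingType.

Lemma det_mxsub_inj m N (f : 'I_m -> 'I_N) (B : 'M[R]_N) :
  m = N -> injective f -> \det (mxsub f f B) = \det B.
Proof.
move=> emN; subst N => f_inj; pose p := perm f_inj.
have -> : mxsub f f B = mxsub p p B by apply: eq_mxsub => i; rewrite permE.
rewrite mxsubrc -row_permEsub -col_permEsub row_permE col_permE !det_mulmx !det_perm.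
by rewrite odd_permV mulrCA -expr2 sqrr_sign mulr1.
Qed.

Variable N : nat.
Implicit Types (A B : 'M[R]_N) (J : {set 'I_N}).

Definition restrict_mx J A : 'M[R]_N :=
  \matrix_(i, j) if (i \in J) && (j \in J) then A i j else (i == j)%:R.

Local Notation sub_mx J A := (mxsub (@enum_val _ (mem J)) (@enum_val _ (mem J)) A).

Lemma det_restrict_mx J A : \det (restrict_mx J A) = \det (sub_mx J A).
Proof.
pose eJ := @enum_val _ (mem J); pose eC := @enum_val _ (mem (~: J)).
pose f (i : 'I_(#|J| + #|~: J|)) : 'I_N :=
  match split i with inl a => eJ a | inr b => eC b end.
have fl a : f (lshift _ a) = eJ a by rewrite /f (unsplitK (inl a : 'I_#|J| + 'I_#|~: J|)).
have fr b : f (rshift _ b) = eC b by rewrite /f (unsplitK (inr b : 'I_#|J| + 'I_#|~: J|)).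
have eJ_in a : eJ a \in J by apply: enum_valP.
have eC_out b : eC b \notin J by rewrite -in_setC; apply: enum_valP.
have f_inj : injective f.
  move=> i j; rewrite -(splitK i) -(splitK j).
  case: (split i) => a; case: (split j) => b /=; rewrite ?fl ?fr.
  - by move/enum_val_inj ->.
  - by move=> E; have := eC_out b; rewrite -E eJ_in.
  - by move=> E; have := eC_out a; rewrite E eJ_in.
  - by move/enum_val_inj ->.
have block : mxsub f f (restrict_mx J A) = block_mx (sub_mx J A) 0 0 1%:M.
  apply/matrixP => i j; rewrite -(splitK i) -(splitK j).
  case: (split i) => a; case: (split j) => b /=; rewrite mxE ?fl ?fr mxE.
  - by rewrite block_mxEul !mxE !eJ_in.
  - rewrite block_mxEur !mxE eJ_in (negbTE (eC_out b)).
    by case: eqP => // E; have := eC_out b; rewrite -E eJ_in.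
  - rewrite block_mxEdl !mxE (negbTE (eC_out a)).
    by case: eqP => // E; have := eC_out a; rewrite E eJ_in.
  - by rewrite block_mxEdr !mxE (negbTE (eC_out a)) (inj_eq enum_val_inj).
rewrite -(det_mxsub_inj _ _ f_inj); last by rewrite cardsC card_ord.
by rewrite block det_ublock det1 mulr1.
Qed.

(* Leibniz expansion, choosing for each row [i] one of the two summands of
   [x A i (s i) + (i == s i)]; the rows taking the first summand form [J]. *)
Lemma det_1_addZ (x : R) A :
  \det (1%:M + x *: A) = \sum_(J : {set 'I_N}) x ^+ #|J| * \det (restrict_mx J A).
Proof.
rewrite /determinant.
transitivity (\sum_(s : 'S_N) \sum_(J : {set 'I_N}) (-1) ^+ s *
   \prod_i (if i \in J then x * A i (s i) else (i == s i)%:R)).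
  apply: eq_bigr => s _; rewrite -mulr_sumr; congr (_ * _).
  rewrite (eq_bigr (fun i => x * A i (s i) + (i == s i)%:R)); last first.
    by move=> i _; rewrite !mxE addrC.
  by rewrite bigA_distr.
rewrite exchange_big /=; apply: eq_bigr => J _; rewrite mulr_sumr.
apply: eq_bigr => s _; rewrite mulrCA; congr (_ * _).
have [/forallP fixC|] := boolP [forall i, (i \notin J) ==> (s i == i)].
  have sJ i : i \in J -> s i \in J.
    move=> iJ; apply: contraTT iJ => siJ; move/implyP: (fixC (s i)) => /(_ siJ) /eqP.
    by move/perm_inj <-.
  rewrite (eq_bigr (fun i => (if i \in J then x else 1) * restrict_mx J A i (s i))).
    by rewrite big_split /= -big_mkcond /= prodr_const.
  move=> i _; rewrite mxE; case: (boolP (i \in J)) => iJ /=; first by rewrite sJ.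
  by rewrite mul1r.
rewrite negb_forall => /existsP [i0]; rewrite negb_imply => /andP[i0J /eqP si0].
rewrite (bigD1 i0) //= (negbTE i0J) [in RHS](bigD1 i0) //= mxE (negbTE i0J) /=.
by rewrite eq_sym; case: eqP => // _; rewrite !mul0r mulr0.
Qed.

End PrincipalMinors.

Lemma coef_det_1_addX (R : comNzRingType) N (A : 'M[R]_N) r :
  (\det (1%:M + 'X *: map_mx polyC A))`_r = principal_minor_sum r A.
Proof.
rewrite det_1_addZ coef_sum /principal_minor_sum [RHS]big_mkcond /=.
apply: eq_bigr => J _.
have -> : restrict_mx J (map_mx polyC A) = map_mx polyC (restrict_mx J A).
  by apply/matrixP => i j; rewrite !mxE; case: ifP => //; rewrite rmorph_nat.
rewrite det_map_mx /= mulrC mul_polyC coefZ coefXn det_restrict_mx eq_sym.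
by case: eqP; rewrite ?mulr1 ?mulr0.
Qed.

Lemma psum_similar (R : comNzRingType) N (Q A C : 'M[R]_N) r : Q *m C = 1%:M ->
  principal_minor_sum r (Q *m A *m C) = principal_minor_sum r A.
Proof.
move=> QC; rewrite -!coef_det_1_addX; congr (_`_r).
have -> : 1%:M + 'X *: map_mx polyC (Q *m A *m C) =
    map_mx polyC Q *m (1%:M + 'X *: map_mx polyC A) *m map_mx polyC C.
  rewrite mulmxDr mulmx1 mulmxDl -map_mxM QC map_mx1; congr (_ + _).
  by rewrite -scalemxAr -scalemxAl !map_mxM.
by rewrite !det_mulmx mulrAC -det_mulmx -map_mxM QC map_mx1 det1 mul1r.
Qed.

Lemma psum_map (R1 R2 : comNzRingType) (f : {rmorphism R1 -> R2}) N r (A : 'M[R1]_N) :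
  principal_minor_sum r (map_mx f A) = f (principal_minor_sum r A).
Proof.
rewrite /principal_minor_sum rmorph_sum; apply: eq_bigr => J _.
by rewrite -map_mxsub det_map_mx.
Qed.

Lemma psum_conj_scale (R : idomainType) N (A B : 'M[R]_N) (lam : 'I_N -> R) c r :
  (forall i, lam i != 0) -> (forall i j, lam i * A i j = c * B i j * lam j) ->
  principal_minor_sum r A = c ^+ r * principal_minor_sum r B.
Proof.
move=> lam0 hAB; rewrite /principal_minor_sum mulr_sumr; apply: eq_bigr => J /eqP <-.
set e := @enum_val _ (mem J); pose D := diag_mx (\row_i lam (e i)).
have E : D *m mxsub e e A = c *: (mxsub e e B *m D).
  by apply/matrixP => i j; rewrite mul_diag_mx mul_mx_diag !mxE hAB; ring.
have detD0 : \det D != 0 by rewrite det_diag; apply/prodf_neq0 => i _; rewrite mxE.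
move: (congr1 determinant E); rewrite det_mulmx detZ det_mulmx mulrA.
by rewrite [in LHS]mulrC => /(mulIf detD0).
Qed.

Lemma psum_shift (R : idomainType) N (A : 'M[{poly R}]_N) (B : 'M[R]_N)
    (w : 'I_N -> nat) d r :
  (forall i j, 'X^(w i) * A i j = (B i j)%:P * 'X^(d + w j)) ->
  principal_minor_sum r A = 'X^(r * d) * (principal_minor_sum r B)%:P.
Proof.
move=> hAB; rewrite mulnC exprM -(psum_map polyC).
apply: (psum_conj_scale (lam := fun i => 'X^(w i))) => [i|i j]; first exact/monic_neq0/monicXn.
by rewrite /= hAB mxE exprD mulrCA mulrA.
Qed.

Section AuxGrading.
Variables (K : fieldType) (n : nat).
Local Notation S0 := {mpoly K[nA n]}.

(* [aux_grade c = sum_e c_e T^e], where [c_e] is the auxiliary-degree-[e] part of [c]. *)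
Definition aux_grade : S0 -> {poly S0} :=
  mmap (polyC \o @mpolyC (nA n) K)
    (fun k : 'I_(nA n) => ('X_k)%:P * 'X^(auxdeg (enum_val k))).
HB.instance Definition _ := GRing.RMorphism.on aux_grade.

Definition aux_var (x : Aidx n) : S0 := 'X_(enum_rank x).

Lemma aux_grade_var x : aux_grade (aux_var x) = (aux_var x)%:P * 'X^(auxdeg x).
Proof. by rewrite /aux_grade /aux_var mmapX mmap1U enum_rankK. Qed.

Lemma aux_gradeC (c : K) : aux_grade c%:MP = (c%:MP)%:P.
Proof. by rewrite /aux_grade mmapC. Qed.

Lemma aux_gradeE (c : S0) :
  aux_grade c = \sum_(m <- msupp c) (c@_m *: 'X_[m])%:P * 'X^(auxmdeg m).
Proof.
have aux_grade1 m : mmap1 (fun k : 'I_(nA n) => ('X_k : S0)%:P * 'X^(auxdeg (enum_val k))) m =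
    ('X_[m])%:P * 'X^(auxmdeg m).
  rewrite /mmap1 (eq_bigr (fun k => (('X_k : S0) ^+ m k)%:P * 'X^(m k * auxdeg (enum_val k)))).
    by rewrite big_split /= -rmorph_prod -mpolyXE_id prodrXr.
  by move=> k _; rewrite exprMn rmorphXn -exprM mulnC.
rewrite /aux_grade /mmap; apply: eq_bigr => m _.
by rewrite aux_grade1 /= mulrA -rmorphM mul_mpolyC.
Qed.

Lemma coef_aux_grade (c : S0) e :
  (aux_grade c)`_e = \sum_(m <- msupp c | auxmdeg m == e) c@_m *: 'X_[m].
Proof.
rewrite aux_gradeE coef_sum [RHS]big_mkcond /=; apply: eq_bigr => m _.
by rewrite mul_polyC coefZ coefXn eq_sym; case: eqP; rewrite ?mulr1 ?mulr0.
Qed.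

Lemma aux_homogP (c : S0) e : aux_homog e c <-> aux_grade c = c%:P * 'X^e.
Proof.
split=> [hc|E m hm].
  rewrite aux_gradeE big_seq (eq_bigr (fun m => (c@_m *: 'X_[m])%:P * 'X^e)).
    by rewrite -big_seq -mulr_suml -rmorph_sum -mpolyE.
  by move=> m hm; rewrite hc.
apply/eqP; apply: contraTT (hm) => he.
have := congr1 (fun p : {poly S0} => (p`_(auxmdeg m))@_m) E.
rewrite coef_aux_grade mul_polyC coefZ coefXn (negbTE he) mulr0 mcoeff0 raddf_sum /=.
rewrite -big_filter (bigD1_seq m) /=; last first.
- exact/filter_uniq/msupp_uniq.
- by rewrite mem_filter eqxx hm.
rewrite mcoeffZ mcoeffX eqxx mulr1 big1_seq ?addr0 => [cm0|m' /andP[hm' _]].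
  by rewrite mcoeff_msupp cm0 eqxx.
by rewrite mcoeffZ mcoeffX (negbTE hm') mulr0.
Qed.

Lemma aux_homog_coef (c : S0) e : aux_homog e ((aux_grade c)`_e).
Proof.
move=> m; rewrite coef_aux_grade => hm.
have : allm (fun m => auxmdeg m == e) (\sum_(m <- msupp c | auxmdeg m == e) c@_m *: 'X_[m]).
  by apply: allm_sum => m' he; apply/allmZ/allmX.
by move/allmP => /(_ m hm) /eqP.
Qed.

(* [c'] is homogeneous of degree [D - k], and [0] when [D < k]. *)
Lemma aux_grade_coefXnM (c : S0) k D (c' := ('X^k * aux_grade c)`_D) :
  'X^k * aux_grade c' = c'%:P * 'X^D.
Proof.
rewrite /c' coefXnM; case: ltnP => [_|kD]; first by rewrite rmorph0 !mulr0 mul0r.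
by rewrite (iffLR (aux_homogP _ _) (@aux_homog_coef c (D - k))) mulrC -mulrA -exprD subnK.
Qed.

End AuxGrading.

Lemma mdeg_sumU n (J : {set 'I_n}) : mdeg (\sum_(j in J) U_(j))%MM = #|J|.
Proof. by rewrite mdeg_sum (eq_bigr (fun _ => 1%N)) ?sum1_card // => j _; rewrite mdeg1. Qed.

Section Generic.
Variables (K : fieldType) (n : nat).
Local Notation S0 := {mpoly K[nA n]}.
Local Notation aux_var := (@aux_var K n).
Local Notation W0 := {mpoly S0[n]}.

(* [g_(i+1)^H] with the parameters [a^(i+1)_J] kept as indeterminates and [T = 1]. *)
Definition generic_g (i : 'I_n) : W0 :=
  \sum_(x : Aidx n | (val x).1 == i) (aux_var x)%:MP * \prod_(j in (val x).2) 'X_j.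

Lemma deg_generic_g (i : 'I_n) : allm (fun m => mdeg m <= i)%N (generic_g i).
Proof.
apply: allm_sum => x /eqP hx; rewrite mul_mpolyC; apply: allmZ.
by rewrite mprodXE; apply: allmX; rewrite mdeg_sumU -hx; apply: (valP x).
Qed.

(* [T] records the total degree, where [v_i] has degree [1] and [a^(i)_J] degree [i - |J|]. *)
Definition tot_grade : W0 -> {poly W0} :=
  mmap (map_poly (@mpolyC n S0) \o @aux_grade K n) (fun i : 'I_n => ('X_i)%:P * 'X).
HB.instance Definition _ := GRing.RMorphism.on tot_grade.

Lemma tot_gradeX m : tot_grade 'X_[m] = ('X_[m])%:P * 'X^(mdeg m).
Proof.
rewrite /tot_grade mmapX /mmap1 (eq_bigr (fun i => (('X_i : W0) ^+ m i)%:P * 'X^(m i))).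
  by rewrite big_split /= -rmorph_prod -mpolyXE_id prodrXr mdegE.
by move=> i _; rewrite exprMn rmorphXn.
Qed.

Lemma tot_gradeC c : tot_grade c%:MP = map_poly (@mpolyC n S0) (aux_grade c).
Proof. by rewrite /tot_grade mmapC. Qed.

Lemma tot_grade_gen (i : 'I_n) :
  tot_grade (gen generic_g i) = (gen generic_g i)%:P * 'X^(i.+1).
Proof.
rewrite /gen !rmorphD /= mulrDl; congr (_ + _).
  rewrite /mesym !raddf_sum /= mulr_suml; apply: eq_bigr => J /eqP hJ.
  by rewrite mprodXE tot_gradeX mdeg_sumU hJ.
rewrite /generic_g !raddf_sum /= mulr_suml; apply: eq_bigr => x /eqP hx.
rewrite rmorphM /= tot_gradeC mprodXE tot_gradeX aux_grade_var.
rewrite !rmorphM /= map_polyC /= map_polyXn mdeg_sumU mulrACA -exprD; congr (_ * 'X^_).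
by rewrite /auxdeg hx; have := valP x; rewrite /= hx; lia.
Qed.

Lemma tot_grade_homog (u : {mpoly K[n]}) d (u' := map_mpoly (@mpolyC (nA n) K) u) :
  u \is d.-homog -> tot_grade u' = u'%:P * 'X^d.
Proof.
move=> hu; have -> : u' = \sum_(m <- msupp u) (u@_m)%:MP *: 'X_[m].
  by rewrite /u' {1}(mpolyE u) raddf_sum; apply: eq_bigr => m _ /=; rewrite map_mpolyZ map_mpolyX.
rewrite !rmorph_sum /= mulr_suml !big_seq; apply: eq_bigr => m hm.
rewrite -mul_mpolyC rmorphM /= tot_gradeC tot_gradeX aux_gradeC map_polyC /=.
by rewrite (dhomog_mf hu hm) mulrA -rmorphM.
Qed.

Lemma coef_tot_grade_artin (c : S0) (t : artin n) D :
  (tot_grade (c *: 'X_[artin_mnm t]))`_D =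
  (('X^(mdeg (artin_mnm t)) * aux_grade c)`_D) *: 'X_[artin_mnm t].
Proof.
rewrite -mul_mpolyC rmorphM /= tot_gradeC tot_gradeX mulrCA coefCM mulrC.
rewrite -(map_polyXn (@mpolyC n S0)) -rmorphM coef_map /=.
by rewrite mul_mpolyC mulrC.
Qed.

(* Taking the [T^D] coefficient of the total grading of an Artin representation of
   the total-degree-[D] element [u v^s] gives one with homogeneous coefficients. *)
Lemma generic_mult_rep (u : {mpoly K[n]}) d (s : artin n) :
  u \is d.-homog -> exists (c : artin n -> S0) (h : 'I_n -> W0),
  map_mpoly (@mpolyC (nA n) K) u * 'X_[artin_mnm s] =
     \sum_t c t *: 'X_[artin_mnm t] + \sum_(i < n) h i * gen generic_g i /\
  forall t, 'X^(mdeg (artin_mnm t)) * aux_grade (c t) = (c t)%:P * 'X^(d + mdeg (artin_mnm s)).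
Proof.
move=> hu; set D := (d + mdeg (artin_mnm s))%N.
have [c [h E]] := artin_spanning deg_generic_g (map_mpoly (@mpolyC (nA n) K) u * 'X_[artin_mnm s]).
have := congr1 (fun p => (tot_grade p)`_D) E.
rewrite rmorphM /= (tot_grade_homog hu) tot_gradeX mulrACA -rmorphM -exprD coefMXn ltnn subnn.
rewrite coefC eqxx rmorphD !raddf_sum /= coefD !coef_sum => ->.
exists (fun t => ('X^(mdeg (artin_mnm t)) * aux_grade (c t))`_D).
exists (fun i : 'I_n => (tot_grade (h i) * 'X^(i.+1))`_D); split; last first.
  by move=> t; apply: aux_grade_coefXnM.
congr (_ + _); apply: eq_bigr => x _; first exact: coef_tot_grade_artin.
by rewrite rmorphM /= tot_grade_gen mulrCA coefCM mulrC.
Qed.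

End Generic.

Lemma eq_rmorph_mpoly (R T : nzRingType) n (F G : {rmorphism {mpoly R[n]} -> T}) :
  (forall c, F c%:MP = G c%:MP) -> (forall i, F 'X_i = G 'X_i) -> F =1 G.
Proof.
move=> FGC FGX; elim/mpolyind => [|c m p _ _ IH]; first by rewrite !rmorph0.
rewrite !rmorphD IH -mul_mpolyC !rmorphM FGC mpolyXE_id !rmorph_prod; congr (_ * _ + _).
by apply: eq_bigr => i _; rewrite !rmorphXn FGX.
Qed.

Section Specialization.
Variables (K : fieldType) (n : nat) (a : Aidx n -> K).
Local Notation S0 := {mpoly K[nA n]}.
Local Notation PT := {poly {mpoly K[n]}}.
Local Notation W1 := {mpoly {poly K}[n]}.
Local Notation KT := (@KT_to_PT K n).
Local Notation g0 := (@generic_g K n).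
Local Notation aux_var := (@aux_var K n).

HB.instance Definition _ := GRing.RMorphism.copy KT (map_poly (@mpolyC n K)).

Definition aux_ev : {rmorphism S0 -> K} := meval (fun k : 'I_(nA n) => a (enum_val k)).

(* Evaluation at [a] of the auxiliary grading: [a^(i)_J] goes to [a^(i)_J T^(i - |J|)]. *)
Definition spec : S0 -> {poly K} := map_poly aux_ev \o @aux_grade K n.
HB.instance Definition _ := GRing.RMorphism.on spec.

Lemma spec_shift (c : S0) k e : 'X^k * aux_grade c = c%:P * 'X^e ->
  'X^k * spec c = (aux_eval c a)%:P * 'X^e.
Proof. by move/(congr1 (map_poly aux_ev)); rewrite !rmorphM /= !map_polyXn map_polyC. Qed.

Lemma specC (c : K) : spec c%:MP = c%:P.
Proof. by rewrite /spec /= aux_gradeC map_polyC /= mevalC. Qed.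

Lemma spec_var x : spec (aux_var x) = (a x)%:P * 'X^(auxdeg x).
Proof.
by rewrite /spec /= aux_grade_var rmorphM /= map_polyC map_polyXn /= mevalXU enum_rankK.
Qed.

Section LiftToPT.
Variables (S : comNzRingType) (f : {rmorphism S -> {poly K}}).

Definition toPT : {mpoly S[n]} -> PT := mmap (KT \o f) (fun i : 'I_n => ('X_i)%:P).
HB.instance Definition _ := GRing.RMorphism.on toPT.

Lemma toPTC c : toPT c%:MP = KT (f c).
Proof. by rewrite /toPT mmapC. Qed.

Lemma toPTX m : toPT 'X_[m] = ('X_[m])%:P.
Proof.
rewrite /toPT mmapX /mmap1 mpolyXE_id rmorph_prod.
by apply: eq_bigr => i _; rewrite rmorphXn.
Qed.

Lemma toPT_mesym k : toPT (mesym n S k) = (mesym n K k)%:P.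
Proof.
rewrite /mesym !rmorph_sum /=; apply: eq_bigr => J _.
by rewrite !rmorph_prod; apply: eq_bigr => i _; rewrite /= toPTX.
Qed.

Lemma toPT_map_mpoly (e : {rmorphism K -> S}) (p : {mpoly K[n]}) :
  (forall c, f (e c) = c%:P) -> toPT (map_mpoly e p) = p%:P.
Proof.
move=> fe; apply: (eq_rmorph_mpoly (F := toPT \o map_mpoly e) (G := polyC)) => [c|i] /=.
  by rewrite map_mpolyC toPTC fe /KT_to_PT map_polyC.
by rewrite map_mpolyX toPTX.
Qed.

Lemma toPT_artin_rep (G : 'I_n -> {mpoly S[n]}) (c : artin n -> S) (h : 'I_n -> {mpoly S[n]}) :
  (forall i, toPT (G i) = genH a i) ->
  inEH a (toPT (\sum_t c t *: 'X_[artin_mnm t] + \sum_(i < n) h i * G i) -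
          \sum_t KT (f (c t)) * ('X_[artin_mnm t])%:P).
Proof.
move=> toPT_G; exists (fun i => toPT (h i)).
rewrite rmorphD !rmorph_sum /= addrAC.
under eq_bigr => t _ do rewrite -mul_mpolyC rmorphM /= toPTC toPTX.
by rewrite subrr add0r; apply: eq_bigr => i _; rewrite rmorphM /= toPT_G.
Qed.

End LiftToPT.

Lemma toPT_surj (p : PT) : exists q, toPT idfun q = p.
Proof.
exists (\sum_(i < size p) map_mpoly polyC p`_i * ('X^i)%:MP).
rewrite rmorph_sum /= -[RHS]coefK poly_def; apply: eq_bigr => i _.
by rewrite rmorphM /= toPT_map_mpoly // toPTC /KT_to_PT map_polyXn mul_polyC.
Qed.

Lemma toPT_generic_g i : toPT spec (g0 i) = gH a i.
Proof.
rewrite /generic_g /gH rmorph_sum; apply: eq_bigr => x _.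
rewrite rmorphM /= mprodXE toPTC toPTX.
rewrite [KT _]/= spec_var rmorphM /= /KT_to_PT map_polyC map_polyXn /= -mprodXE; ring.
Qed.

Lemma toPT_gen_generic i : toPT spec (gen g0 i) = genH a i.
Proof. by rewrite /gen rmorphD /= toPT_mesym toPT_generic_g. Qed.

Definition spec_g (i : 'I_n) : W1 :=
  \sum_(x : Aidx n | (val x).1 == i) ((a x)%:P * 'X^(auxdeg x))%:MP * \prod_(j in (val x).2) 'X_j.

Lemma deg_spec_g (i : 'I_n) : allm (fun m => mdeg m <= i)%N (spec_g i).
Proof.
apply: allm_sum => x /eqP hx; rewrite mul_mpolyC; apply: allmZ.
by rewrite mprodXE; apply: allmX; rewrite mdeg_sumU -hx; apply: (valP x).
Qed.

Lemma toPT_gen_spec_g i : toPT idfun (gen spec_g i) = genH a i.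
Proof.
rewrite /gen rmorphD /= toPT_mesym; congr (_ + _).
rewrite /spec_g /gH (rmorph_sum (toPT idfun)); apply: eq_bigr => x _.
rewrite rmorphM /= mprodXE toPTC toPTX /= /KT_to_PT rmorphM /=.
by rewrite map_polyC map_polyXn -mprodXE; ring.
Qed.

End Specialization.

Section Coordinates.
Variables (K : fieldType) (n : nat) (a : Aidx n -> K).
Local Notation PT := {poly {mpoly K[n]}}.
Local Notation KT := (@KT_to_PT K n).
Local Notation inE := (inEH a).

Lemma inEHD p q : inE p -> inE q -> inE (p + q).
Proof.
case=> h1 -> [h2 ->]; exists (fun i => h1 i + h2 i).
by rewrite -big_split /=; apply: eq_bigr => i _; rewrite mulrDl.
Qed.

Lemma inEHMl q p : inE p -> inE (q * p).
Proof.
case=> h ->; exists (fun i => q * h i).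
by rewrite mulr_sumr; apply: eq_bigr => i _; rewrite mulrA.
Qed.

Lemma inEHB p q : inE p -> inE q -> inE (p - q).
Proof. by move=> hp hq; rewrite -mulN1r; apply/inEHD/inEHMl. Qed.

Lemma inEH_sum (I : Type) (r : seq I) (P : pred I) (F : I -> PT) :
  (forall i, P i -> inE (F i)) -> inE (\sum_(i <- r | P i) F i).
Proof.
move=> hF; elim/big_rec: _ => [|i x Pi hx]; last exact/inEHD/hx/hF.
by exists (fun _ => 0); rewrite big1 // => i _; rewrite mul0r.
Qed.

Variable N : nat.

Definition is_coord (b : 'I_N -> PT) (x : PT) (c : 'I_N -> {poly K}) :=
  inE (x - \sum_k KT (c k) * b k).

Lemma coord_id (b : 'I_N -> PT) j : is_coord b (b j) (fun k => (k == j)%:R).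
Proof.
exists (fun _ => 0); rewrite [RHS]big1 => [|i _]; last by rewrite mul0r.
rewrite (bigD1 j) //= eqxx rmorph1 mul1r big1 ?addr0 ?subrr // => k /negbTE ->.
by rewrite rmorph0 mul0r.
Qed.

Lemma coordMl (X : 'I_N -> PT) x c q :
  is_coord X x c -> is_coord (fun k => q * X k) (q * x) c.
Proof.
move/(inEHMl q); rewrite /is_coord mulrBr mulr_sumr.
by under eq_bigr => k _ do rewrite mulrCA.
Qed.

Lemma coord_matrix (X Y : 'I_N -> PT) :
  (forall j, exists c, is_coord Y (X j) c) ->
  exists T : 'M_N, forall j, is_coord Y (X j) (fun k => T k j).
Proof.
move=> /fin_all_exists [c hc]; exists (\matrix_(k, j) c j k) => j.
by rewrite /is_coord; under eq_bigr => k _ do rewrite mxE; apply: hc.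
Qed.

Lemma coord_mul (X Y x : 'I_N -> PT) (T A : 'M_N) :
  (forall k, is_coord Y (X k) (fun l => T l k)) ->
  (forall j, is_coord X (x j) (fun k => A k j)) ->
  forall j, is_coord Y (x j) (fun l => (T *m A) l j).
Proof.
move=> hXY hx j; rewrite /is_coord.
have -> : \sum_l KT ((T *m A) l j) * Y l = \sum_k KT (A k j) * \sum_l KT (T l k) * Y l.
  under eq_bigr => l _ do rewrite mxE rmorph_sum /= mulr_suml.
  rewrite exchange_big /=; apply: eq_bigr => k _; rewrite mulr_sumr.
  by apply: eq_bigr => l _; rewrite rmorphM mulrA [KT (A k j) * _]mulrC.
set S := fun k => \sum_l KT (T l k) * Y l.
have -> : x j - \sum_k KT (A k j) * S k =
    (x j - \sum_k KT (A k j) * X k) + \sum_k KT (A k j) * (X k - S k).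
  by rewrite (eq_bigr _ (fun k _ => mulrBr (KT (A k j)) (X k) (S k))) sumrB; ring.
by apply: inEHD (hx j) _; apply: inEH_sum => k _; apply/inEHMl/hXY.
Qed.

Lemma coord_unique (b : 'I_N -> PT) x c c' :
  is_basis_mod_EH a b -> is_coord b x c -> is_coord b x c' -> c =1 c'.
Proof.
move=> [_ indep] h1 h2 k; apply/eqP; rewrite -subr_eq0; apply/eqP.
apply: (indep (fun k => c k - c' k)).
have -> : \sum_l KT (c l - c' l) * b l =
    (x - \sum_l KT (c' l) * b l) - (x - \sum_l KT (c l) * b l).
  by under eq_bigr => l _ do rewrite rmorphB mulrBl; rewrite sumrB; ring.
exact: inEHB.
Qed.

(* Coordinates along a spanning family [D] and along the basis [b] are related by
   [Q *m C = 1], and the two matrices of [mult_u] are then conjugate. *)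
Lemma basis_change_psum (b D : 'I_N -> PT) u (M Ms : 'M[{poly K}]_N) r :
  is_basis_mod_EH a b -> (forall p, exists c, is_coord D p c) ->
  represents_mult a b u M -> represents_mult a D u Ms ->
  principal_minor_sum r M = principal_minor_sum r Ms.
Proof.
move=> hb hD hM hMs.
have [C hC] := coord_matrix (fun j => hD (b j)).
have [Q hQ] := coord_matrix (fun j => hb.1 (D j)).
have QC : Q *m C = 1%:M.
  apply/matrixP => l j; rewrite [RHS]mxE.
  exact: coord_unique hb (coord_mul hQ hC j) (coord_id b j) l.
have -> : M = Q *m Ms *m C.
  apply/matrixP => l j; rewrite -mulmxA.
  apply: coord_unique hb (hM j) (coord_mul hQ (coord_mul hMs (fun j => coordMl u%:P (hC j))) j) l.
by rewrite psum_similar.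
Qed.

End Coordinates.

Definition artin_PT (K : fieldType) n (k : 'I_(n`!)) : {poly {mpoly K[n]}} :=
  ('X_[artin_mnm (artin_of_ord k)])%:P.

Definition artin_deg n (k : 'I_(n`!)) : nat := mdeg (artin_mnm (artin_of_ord k)).

Lemma artin_span_PT (K : fieldType) n (a : Aidx n -> K) (p : {poly {mpoly K[n]}}) :
  exists c, is_coord a (@artin_PT K n) p c.
Proof.
have [q <-] := toPT_surj p.
have [c [h ->]] := artin_spanning (deg_spec_g a) q.
exists (c \o @artin_of_ord n); rewrite /is_coord.
have -> : \sum_k KT_to_PT n ((c \o @artin_of_ord n) k) * artin_PT K k =
    \sum_t KT_to_PT n (c t) * ('X_[artin_mnm t])%:P by rewrite sum_artin.
exact/toPT_artin_rep/toPT_gen_spec_g.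
Qed.

Lemma generic_mult_matrix (K : fieldType) n (u : {mpoly K[n]}) d :
  u \is d.-homog -> exists Mg : 'M[{mpoly K[nA n]}]_(n`!),
  (forall i j, 'X^(artin_deg i) * aux_grade (Mg i j) = (Mg i j)%:P * 'X^(d + artin_deg j)) /\
  forall a, represents_mult a (@artin_PT K n) u (map_mx (spec a) Mg).
Proof.
move=> hu.
have /fin_all_exists [c /fin_all_exists [h rep]] := fun s => @generic_mult_rep K n u d s hu.
exists (\matrix_(i, j) c (artin_of_ord j) (artin_of_ord i)); split=> [i j|a j].
  by rewrite mxE; apply: (rep _).2.
have := toPT_artin_rep (c (artin_of_ord j)) (h (artin_of_ord j)) (toPT_gen_generic a).
rewrite -(rep _).1 rmorphM /= toPT_map_mpoly ?toPTX; last exact: specC.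
by rewrite sum_artin; under eq_bigr => i _ do rewrite !mxE.
Qed.

Unset Implicit Arguments.

Theorem lemma3p4 (K : fieldType) (n : nat)
    (hchar : forall p : nat, p \in [pchar K] -> (n < p)%N)
    (u : {mpoly K[n]}) (d : nat) (hu : u \is [in K[n], d.-homog])
    (r : nat) (hr : (1 <= r)%N) :
  exists R : {mpoly K[nA n]},
    aux_homog (r * d) R /\
    forall (a : Aidx n -> K) (b : 'I_(n`!) -> {poly {mpoly K[n]}})
           (M : 'M[{poly K}]_(n`!)),
      is_basis_mod_EH a b -> represents_mult a b u M ->
      principal_minor_sum r M = 'X^(r * d) * (aux_eval R a)%:P.
Proof.
have [Mg [Mg_shift Mg_rep]] := generic_mult_matrix hu.
exists (principal_minor_sum r Mg); split.
  apply/aux_homogP.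
  have -> : aux_grade (principal_minor_sum r Mg) =
      principal_minor_sum r (map_mx (@aux_grade K n) Mg) by rewrite psum_map.
  rewrite (psum_shift (d := d) (B := Mg) (w := @artin_deg n)); first exact: mulrC.
  by move=> i j; rewrite mxE Mg_shift.
move=> a b M hb hM.
rewrite (basis_change_psum r hb (@artin_span_PT K n a) hM (Mg_rep a)).
rewrite (psum_shift (d := d) (B := map_mx (aux_ev a) Mg) (w := @artin_deg n)) ?psum_map //.
by move=> i j; rewrite !mxE; apply: spec_shift.
Qed.
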